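(* Let $(X,x^* )$ be a pointed topological space and $n\geq 1$. Then $\pi_n^{top}(X,x^* )$ is a homogeneous space, i.e. for any two elements $a,b\in\pi_n^{top}(X,x^* )$ there is a homeomorphism of $\pi_n^{top}(X,x^* )$ onto itself sending $a$ to $b$.
   Context: $\pi_n^{top}(X,x^* )$ denotes the $n$-th homotopy group $\pi_n(X,x^* )$ endowed with the quotient topology induced by the map $\Omega^n(X,x^* )\to\pi_n(X,x^* )$, $f\mapsto[f]$, where $\Omega^n(X,x^* )$ is the space of maps $(I^n,\partial I^n)\to(X,x^* )$ with the compact-open topology. *)

From HB Require Import structures.
From mathcomp Require Import all_boot all_order all_algebra.
From mathcomp Require Import all_classical all_reals all_analysis.
Set Implicit Arguments. Unset Strict Implicit. Unset Printing Implicit Defensive.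
Import Order.TTheory GRing.Theory Num.Theory.
Import numFieldNormedType.Exports.
Local Open Scope classical_set_scope.
Local Open Scope ring_scope.

Definition cube_set (R : realType) (n : nat) : set 'rV[R]_n :=
  [set x | forall i : 'I_n, 0 <= x ord0 i <= 1].
Arguments cube_set : clear implicits.
Definition cube (R : realType) (n : nat) : topologicalType :=
  set_type (cube_set R n).

Definition unit_set (R : realType) : set R := [set t | 0 <= t <= 1].
Arguments unit_set : clear implicits.
Definition unitI (R : realType) : topologicalType := set_type (unit_set R).

Definition cube_boundary (R : realType) (n : nat) : set (cube R n) :=
  [set s : cube R n | exists i : 'I_n, (proj1_sig s) ord0 i = 0 \/ (proj1_sig s) ord0 i = 1].

Definition Omega_set (R : realType) (n : nat) (X : topologicalType) (x0 : X)
  : set {compact-open, cube R n -> X} :=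
  [set f | continuous (f : cube R n -> X) /\
           forall s, cube_boundary s -> f s = x0].
Definition Omega (R : realType) (n : nat) (X : topologicalType) (x0 : X)
  : topologicalType := set_type (@Omega_set R n X x0).
Arguments Omega_set : clear implicits.
Arguments Omega : clear implicits.

Definition rel_homotopic (R : realType) (n : nat) (X : topologicalType) (x0 : X)
  (f g : Omega R n X x0) : Prop :=
  exists H : cube R n * unitI R -> X,
    [/\ continuous H,
        forall s t, val t = 0 -> H (s, t) = (val f : cube R n -> X) s,
        forall s t, val t = 1 -> H (s, t) = (val g : cube R n -> X) s &
        forall s t, cube_boundary s -> H (s, t) = x0].

Definition hclass (R : realType) (n : nat) (X : topologicalType) (x0 : X)
  (f : Omega R n X x0) : set (Omega R n X x0) := [set g | rel_homotopic f g].

Definition pin_set (R : realType) (n : nat) (X : topologicalType) (x0 : X)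
  : set (set (Omega R n X x0)) := [set C | exists f, C = hclass f].
Definition pin_top (R : realType) (n : nat) (X : topologicalType) (x0 : X)
  : Type := set_type (@pin_set R n X x0).
Arguments pin_set : clear implicits.
Arguments pin_top : clear implicits.

HB.instance Definition _ R n X x0 := Choice.on (@pin_top R n X x0).

Lemma hclass_in_pin (R : realType) (n : nat) (X : topologicalType) (x0 : X)
  (f : Omega R n X x0) : hclass f \in @pin_set R n X x0.
Proof. by rewrite inE; exists f. Qed.

Definition pin_proj (R : realType) (n : nat) (X : topologicalType) (x0 : X)
  (f : Omega R n X x0) : pin_top R n X x0 :=
  exist _ (hclass f) (hclass_in_pin f).

Definition pin_open (R : realType) (n : nat) (X : topologicalType) (x0 : X)
  (U : set (pin_top R n X x0)) : Prop := open (@pin_proj R n X x0 @^-1` U).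

Program Definition pin_topology_mixin (R : realType) (n : nat)
  (X : topologicalType) (x0 : X) :=
  @isOpenTopological.Build (pin_top R n X x0) (@pin_open R n X x0) _ _ _.
Next Obligation. by move=> *; rewrite /pin_open preimage_setT; exact: openT. Qed.
Next Obligation. by move=> ? ? ? ? A B oA oB; exact: (openI oA oB). Qed.
Next Obligation.
by move=> ? ? ? ? I f ofi; rewrite /pin_open preimage_bigcup;
   apply: bigcup_open => i _; exact: ofi.
Qed.
HB.instance Definition _ R n X x0 := @pin_topology_mixin R n X x0.

Definition pin (R : realType) (n : nat) (X : topologicalType) (x0 : X)
  : topologicalType := pin_top R n X x0.
Arguments pin : clear implicits.

Definition homeomorphism (T : topologicalType) (h : T -> T) : Prop :=
  exists g : T -> T, [/\ continuous h, continuous g, cancel h g & cancel g h].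

(* Left concatenation f |-> u * f with a fixed u in Omega^n, along the first
   coordinate, respects homotopy rel boundary and is continuous for the
   compact-open topology, because u * f reads f through a fixed continuous
   rescaling of half of I^n. It therefore induces a continuous self-map of
   pi_n^top, whose continuous inverse is induced by the reversed loop since
   reverse u * (u * f) is homotopic to f. Translating by reverse a and then by b
   sends [a] to [b * (reverse a * a)] = [b * (reverse b * b)] = [b]. *)

From mathcomp Require Import all_boot all_order all_algebra.
From mathcomp Require Import all_classical all_reals all_analysis.
From mathcomp Require Import lra.
Set Implicit Arguments. Unset Strict Implicit. Unset Printing Implicit Defensive.
Import Order.TTheory GRing.Theory Num.Theory.
Import numFieldNormedType.Exports.
Local Open Scope classical_set_scope.
Local Open Scope ring_scope.

Section continuity_combinators.
Context {T A B : topologicalType}.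

Lemma continuous_compose (f : T -> A) (g : A -> B) :
  continuous f -> continuous g -> continuous (fun x => g (f x)).
Proof. by move=> cf cg x; apply: continuous_comp; [exact: cf | exact: cg]. Qed.

Lemma continuous_pair (f : T -> A) (g : T -> B) :
  continuous f -> continuous g -> continuous (fun x => (f x, g x)).
Proof. by move=> cf cg x; apply: cvg_pair; [exact: cf | exact: cg]. Qed.

Lemma fst_continuous : continuous (@fst A B).
Proof. by move=> p; apply: cvg_fst. Qed.

Lemma snd_continuous : continuous (@snd A B).
Proof. by move=> p; apply: cvg_snd. Qed.

Lemma pasting_continuous (F G H : T -> A) (U V : set T) :
  closed U -> closed V -> U `|` V = setT ->
  continuous G -> continuous H ->
  {in U, F =1 G} -> {in V, F =1 H} -> continuous F.
Proof.
move=> cU cV UV cG cH FG FH; apply/continuous_subspace_setT; rewrite -UV.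
apply: withinU_continuous => //.
  by apply: (subspace_eq_continuous (f := G)); [move=> x /FG | exact: continuous_subspaceT].
by apply: (subspace_eq_continuous (f := H)); [move=> x /FH | exact: continuous_subspaceT].
Qed.

End continuity_combinators.

Lemma continuous_apply2 {T A B C : topologicalType} (op : A -> B -> C)
    (f : T -> A) (g : T -> B) :
  continuous (fun p : A * B => op p.1 p.2) -> continuous f -> continuous g ->
  continuous (fun x => op (f x) (g x)).
Proof.
move=> cop cf cg.
exact: (continuous_compose (g := fun p : A * B => op p.1 p.2) (continuous_pair cf cg) cop).
Qed.

Lemma max_continuous (R : realType) :
  continuous (fun p : R * R => Num.max p.1 p.2).
Proof. exact: max_fun_continuous fst_continuous snd_continuous. Qed.

Lemma set_val_continuous (T : topologicalType) (A : set T) :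
  continuous (@set_val T A).
Proof. exact: initial_continuous. Qed.

Create HintDb continuous.

(* Ring operations and the registered atoms are closed with [exact:]: plain
   [Hint Resolve] fails to unify the canonical topologies of their carriers. *)
Ltac continuous_atom :=
  lazymatch goal with
  | |- continuous (fun p => p.1 + p.2) => exact: add_continuous
  | |- continuous (fun p => p.1 * p.2) => exact: mul_continuous
  | |- continuous (fun p => Num.max p.1 p.2) => exact: max_continuous
  | |- continuous -%R => exact: opp_continuous
  | |- continuous fst => exact: fst_continuous
  | |- continuous snd => exact: snd_continuous
  | |- _ => solve [assumption | exact: set_val_continuous |
                     exact: coord_continuous | auto with continuous]
  end.

Ltac continuity_step :=
  lazymatch goal with
  | |- continuous (fun _ => ?c) => exact: cst_continuous
  | |- continuous (fun z => z) => move=> ?; exact: cvg_id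
  | |- continuous (fun z => (@?f z, @?g z)) =>
      refine (continuous_pair (f := f) (g := g) _ _)
  | |- _ => first
      [ match goal with |- continuous (fun z => ?op (@?f z) (@?g z)) =>
          refine (@continuous_apply2 _ _ _ _ op f g _ _ _); [continuous_atom | |] end
      | match goal with |- continuous (fun z => ?g (@?f z)) =>
          refine (continuous_compose (f := f) (g := g) _ _); [|continuous_atom] end
      | continuous_atom ]
  end.

(* Proves [continuous F] for F built by pairing and application from
   projections, ring operations, max, hypotheses and the atoms registered in
   the [continuous] hint database. *)
Ltac continuity := solve [repeat (cbv beta; continuity_step)].

Lemma row_continuous (T : topologicalType) (R : realType) n (f : 'I_n -> T -> R) :
  (forall i, continuous (f i)) -> continuous (fun t => \row_i f i t).
Proof.
move=> cf t A [P Pn PA]; rewrite /= nbhs_simpl /=.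
have : \forall s \near t, forall i : 'I_1, forall j : 'I_n, P i j (f j s).
  apply: filter_forall => i; apply: filter_forall => j.
  by have := Pn i j; rewrite mxE => /cf.
by apply: filterS => s Ps; apply: PA => i j; rewrite mxE; exact: Ps.
Qed.

Lemma closed_le_preimage (T : topologicalType) (R : realType) (h : T -> R) (c : R) :
  continuous h -> closed [set x | h x <= c].
Proof. by move=> ch; exact: (continuous_closedP h).1 ch _ (@closed_le R c). Qed.

Lemma closed_ge_preimage (T : topologicalType) (R : realType) (h : T -> R) (c : R) :
  continuous h -> closed [set x | c <= h x].
Proof. by move=> ch; exact: (continuous_closedP h).1 ch _ (@closed_ge R c). Qed.

Section clamp.
Variable R : realType.
Implicit Types v : R.

Definition clamp v : R := Num.min (Num.max v 0) 1.

Lemma clamp_continuous : continuous clamp.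
Proof.
have -> : clamp = (id \max (fun=> 0)) \min (fun=> 1) by [].
apply: min_fun_continuous; last exact: cst_continuous.
by apply: max_fun_continuous => x; [exact: cvg_id | exact: cvg_cst].
Qed.

Lemma clamp_itv v : 0 <= clamp v <= 1.
Proof. by rewrite le_min ler01 le_max lexx orbT ge_min lexx orbT. Qed.

Lemma clamp_id v : 0 <= v <= 1 -> clamp v = v.
Proof. by case/andP => v0 v1; rewrite /clamp (max_idPl v0) (min_idPl v1). Qed.

Lemma clamp_le0 v : v <= 0 -> clamp v = 0.
Proof. by move=> v0; rewrite /clamp (max_idPr v0) (min_idPl ler01). Qed.

Lemma clamp_ge1 v : 1 <= v -> clamp v = 1.
Proof. by move=> v1; rewrite /clamp (max_idPl (le_trans ler01 v1)) (min_idPr v1). Qed.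

End clamp.

#[export] Hint Extern 1 (continuous_at _ (@clamp _)) =>
  exact: clamp_continuous : continuous.

Section unit_interval.
Variable R : realType.

Definition unit_of (v : R) : unitI R :=
  exist (fun y : R => y \in unit_set R) (clamp v) (mem_set (clamp_itv v)).

Lemma unit_of_continuous : continuous unit_of.
Proof.
apply: (@continuous_comp_initial _ _ _ (@set_val _ (unit_set R))).
exact: clamp_continuous.
Qed.

Lemma val_unit_of (v : R) : val (unit_of v) = clamp v.
Proof. by []. Qed.

End unit_interval.

#[export] Hint Extern 1 (continuous_at _ (@unit_of _)) =>
  exact: unit_of_continuous : continuous.

Section cube.
Variables (R : realType) (n : nat).

Lemma cube_itv (s : cube R n) i : 0 <= val s ord0 i <= 1.
Proof. by case: s => x xI; exact: (set_mem xI i). Qed.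

Lemma clamp_row_in_cube (x : 'rV[R]_n) :
  \row_i clamp (x ord0 i) \in cube_set R n.
Proof. by apply/mem_set => i; rewrite mxE clamp_itv. Qed.

(* Clamping each coordinate retracts R^n onto I^n; this makes [set_coord0 s v]
   below meaningful for every real v. *)
Definition cube_of (x : 'rV[R]_n) : cube R n :=
  exist (fun y => y \in cube_set R n) _ (clamp_row_in_cube x).

Lemma cube_of_continuous : continuous cube_of.
Proof.
apply: (@continuous_comp_initial _ _ _ (@set_val _ (cube_set R n))).
have -> : set_val \o cube_of = fun x => \row_i clamp (x ord0 i).
  by apply: funext => x; rewrite /= set_valE.
by apply: row_continuous => i; continuity.
Qed.

Lemma cube_of_val (s : cube R n) : cube_of (val s) = s.
Proof. by apply: val_inj; apply/rowP => i; rewrite mxE clamp_id // cube_itv. Qed.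

End cube.

#[export] Hint Extern 1 (continuous_at _ (@cube_of _ _)) =>
  exact: cube_of_continuous : continuous.

Section first_coordinate.
Variables (R : realType) (m : nat).
Implicit Types (s : cube R m.+1) (v w : R).

Definition coord0 s : R := val s ord0 ord0.

Definition set_coord0 s v : cube R m.+1 :=
  cube_of (\row_i if i == ord0 then v else val s ord0 i).

Lemma val_coord_continuous i : continuous (fun s : cube R m.+1 => val s ord0 i).
Proof.
apply: (@continuous_compose _ _ _ (fun s : cube R m.+1 => val s)
  (fun M : 'rV[R]_m.+1 => M ord0 i)); [exact: set_val_continuous | exact: coord_continuous].
Qed.

Lemma coord0_continuous : continuous coord0.
Proof. exact: val_coord_continuous. Qed.

Lemma set_coord0_continuous : continuous (fun p : cube R m.+1 * R => set_coord0 p.1 p.2).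
Proof.
apply: (continuous_compose _ (@cube_of_continuous _ _)); apply: row_continuous => i.
case: (i == ord0); first exact: snd_continuous.
apply: (@continuous_compose _ _ _ fst (fun s : cube R m.+1 => val s ord0 i)).
  exact: fst_continuous.
exact: val_coord_continuous.
Qed.

Lemma coord0_itv s : 0 <= coord0 s <= 1.
Proof. exact: cube_itv. Qed.

Lemma coord0_set_coord0 s v : coord0 (set_coord0 s v) = clamp v.
Proof. by rewrite /coord0 /= !mxE eqxx. Qed.

Lemma set_coord0_other s v i : i != ord0 -> val (set_coord0 s v) ord0 i = val s ord0 i.
Proof. by move=> /negPf i0; rewrite /= !mxE i0 clamp_id // cube_itv. Qed.

Lemma set_coord0_set_coord0 s v w : set_coord0 (set_coord0 s v) w = set_coord0 s w.
Proof.
apply: val_inj; apply/rowP => i; rewrite /= !mxE.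
by case: eqP => // _; rewrite clamp_id // clamp_itv.
Qed.

Lemma set_coord0_id s : set_coord0 s (coord0 s) = s.
Proof.
rewrite -[RHS]cube_of_val; congr cube_of; apply/rowP => i; rewrite !mxE.
by case: eqP => // ->.
Qed.

Lemma boundary_set_coord0 s v : v <= 0 \/ 1 <= v -> cube_boundary (set_coord0 s v).
Proof.
move=> v01; exists ord0; have := coord0_set_coord0 s v; rewrite /coord0 => ->.
by case: v01 => [/clamp_le0|/clamp_ge1]; [left | right].
Qed.

Lemma cube_boundaryP s : cube_boundary s ->
  coord0 s = 0 \/ coord0 s = 1 \/ forall v, cube_boundary (set_coord0 s v).
Proof.
case=> i si; have [i0|i0] := eqVneq i ord0.
  by rewrite /coord0 -i0; case: si; [left | right; left].
by right; right => v; exists i; rewrite set_coord0_other.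
Qed.

End first_coordinate.

#[export] Hint Extern 1 (continuous_at _ (@coord0 _ _)) =>
  exact: coord0_continuous : continuous.
#[export] Hint Extern 1 (continuous_at _ (fun p => set_coord0 p.1 p.2)) =>
  exact: set_coord0_continuous : continuous.

Section homotopy_classes.
Variables (R : realType) (n : nat) (X : topologicalType) (x0 : X).
Local Notation Omega := (Omega R n X x0).
Implicit Types f g h : Omega.

Definition loop f : cube R n -> X := val f.

Lemma loop_continuous f : continuous (loop f).
Proof. by case: (set_mem (valP f)). Qed.

Lemma loop_boundary f s : cube_boundary s -> loop f s = x0.
Proof. by case: (set_mem (valP f)) => _; apply. Qed.

Definition mk_omega (p : cube R n -> X) (cp : continuous p)
    (bp : forall s, cube_boundary s -> p s = x0) : Omega :=
  exist (fun y : {compact-open, cube R n -> X} => y \in Omega_set R n X x0)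
    p (mem_set (conj cp bp)).

Lemma rel_homotopic_refl f : rel_homotopic f f.
Proof.
exists (fun z : cube R n * unitI R => loop f z.1); split => //.
  by have cf := @loop_continuous f; continuity.
by move=> s t /loop_boundary.
Qed.

Lemma rel_homotopic_sym f g : rel_homotopic f g -> rel_homotopic g f.
Proof.
case=> H [cH H0 H1 Hb].
exists (fun z : cube R n * unitI R => H (z.1, unit_of (1 - val z.2))); split.
- by continuity.
- by move=> s t /= ->; apply: H1; rewrite val_unit_of subr0 clamp_ge1.
- by move=> s t /= ->; apply: H0; rewrite val_unit_of subrr clamp_le0.
- by move=> s t /Hb.
Qed.

Lemma rel_homotopic_trans f g h :
  rel_homotopic f g -> rel_homotopic g h -> rel_homotopic f h.
Proof.
case=> H [cH H0 H1 Hb]; case=> K [cK K0 K1 Kb].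
pose Z := (cube R n * unitI R)%type.
have ct : continuous (fun z : Z => val z.2) by continuity.
exists (fun z : Z => if val z.2 <= 2^-1 then H (z.1, unit_of (2 * val z.2))
                     else K (z.1, unit_of (2 * val z.2 - 1))); split.
- apply: (pasting_continuous (G := fun z : Z => H (z.1, unit_of (2 * val z.2)))
    (H := fun z : Z => K (z.1, unit_of (2 * val z.2 - 1)))
    (U := [set z | val z.2 <= 2^-1]) (V := [set z | 2^-1 <= val z.2])).
  + exact: closed_le_preimage.
  + exact: closed_ge_preimage.
  + apply/seteqP; split => // z _ /=.
    by case: (lerP (val z.2) 2^-1) => z2; [left | right; exact: ltW].
  + by continuity.
  + by continuity.
  + by move=> z /set_mem /= ->.
  + move=> z /set_mem /= z2; case: ifP => // z2'.
    have -> : val z.2 = 2^-1 by apply/eqP; rewrite eq_le z2 z2'.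
    rewrite mulfV ?pnatr_eq0 // subrr H1 ?val_unit_of ?clamp_ge1 //.
    by rewrite K0 // val_unit_of clamp_le0.
- move=> s t /= ->; rewrite ifT ?invr_ge0 ?ler0n //.
  by rewrite H0 // val_unit_of mulr0 clamp_le0.
- move=> s t /= ->; rewrite ifF; last by apply/negbTE; rewrite -ltNge invf_lt1 // ltr1n.
  by rewrite K1 // val_unit_of mulr1 clamp_ge1 //; lra.
- by move=> s t sb /=; case: ifP => _; [exact: Hb | exact: Kb].
Qed.

Lemma pin_proj_eq f g : pin_proj f = pin_proj g <-> rel_homotopic f g.
Proof.
split=> [/(congr1 val) /= fg | fg].
  have : hclass g g := rel_homotopic_refl g.
  by rewrite -fg.
apply: val_inj; apply/seteqP; split=> h /=.
  exact: rel_homotopic_trans (rel_homotopic_sym fg).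
exact: rel_homotopic_trans fg.
Qed.

Lemma pin_proj_surj (c : pin R n X x0) : exists f, pin_proj f = c.
Proof. by case: c => C CP; have [f fC] := set_mem CP; exists f; apply: val_inj. Qed.

End homotopy_classes.

Arguments loop_continuous {R n X x0} f.

Section concatenation.
Variables (R : realType) (m : nat) (X : topologicalType) (x0 : X).
Local Notation I := (cube R m.+1).
Local Notation Omega := (Omega R m.+1 X x0).
Implicit Types (p q : I -> X) (s : I) (u f g : Omega).

Definition based p := forall s, cube_boundary s -> p s = x0.

Lemma loop_based f : based (loop f).
Proof. exact: loop_boundary. Qed.

Lemma loop_set_coord0_0 f s : loop f (set_coord0 s 0) = x0.
Proof. by apply/loop_boundary/boundary_set_coord0; left. Qed.

Lemma loop_set_coord0_1 f s : loop f (set_coord0 s 1) = x0.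
Proof. by apply/loop_boundary/boundary_set_coord0; right. Qed.

Definition glue p q (v : R) s : X :=
  if v <= 1 then p (set_coord0 s v) else q (set_coord0 s (v - 1)).

Lemma glue_set_coord0 p q v s w : glue p q v (set_coord0 s w) = glue p q v s.
Proof. by rewrite /glue !set_coord0_set_coord0. Qed.

Lemma glue_continuous (T : topologicalType) (P Q : T -> I -> X) (mu : T -> R)
    (sigma : T -> I) :
  continuous (fun z : T * I => P z.1 z.2) -> continuous (fun z : T * I => Q z.1 z.2) ->
  continuous mu -> continuous sigma ->
  (forall t s, P t (set_coord0 s 1) = Q t (set_coord0 s 0)) ->
  continuous (fun t => glue (P t) (Q t) (mu t) (sigma t)).
Proof.
move=> cP cQ cmu csigma PQ.
apply: (pasting_continuous (U := [set t | mu t <= 1]) (V := [set t | 1 <= mu t])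
  (G := fun t => P t (set_coord0 (sigma t) (mu t)))
  (H := fun t => Q t (set_coord0 (sigma t) (mu t - 1)))).
- exact: closed_le_preimage.
- exact: closed_ge_preimage.
- apply/seteqP; split => // t _ /=.
  by case: (lerP (mu t) 1) => mu1; [left | right; exact: ltW].
- apply: (@continuous_compose _ _ _ (fun t => (t, set_coord0 (sigma t) (mu t)))
    (fun z : T * I => P z.1 z.2)) => //.
  by continuity.
- apply: (@continuous_compose _ _ _ (fun t => (t, set_coord0 (sigma t) (mu t - 1)))
    (fun z : T * I => Q z.1 z.2)) => //.
  by continuity.
- by move=> t /set_mem /= mu1; rewrite /glue mu1.
- move=> t /set_mem /= mu1; rewrite /glue; case: ifP => // mu1'.
  have -> : mu t = 1 by apply/eqP; rewrite eq_le mu1 mu1'.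
  by rewrite subrr PQ.
Qed.

Lemma glue_based p q v s : based p -> based q -> cube_boundary s ->
  (coord0 s = 0 \/ coord0 s = 1 -> v <= 0 \/ v = 1 \/ 2 <= v) ->
  glue p q v s = x0.
Proof.
move=> bp bq /cube_boundaryP sb v012.
have [side|v3] : (forall w, cube_boundary (set_coord0 s w)) \/ (v <= 0 \/ v = 1 \/ 2 <= v).
- by case: sb => [s0|[s1|side]]; [right; apply: v012; left | right; apply: v012; right | left].
- by rewrite /glue; case: ifP => _; [exact: bp | exact: bq].
rewrite /glue; case: lerP => v1; [apply: bp | apply: bq]; apply: boundary_set_coord0.
  by case: v3 => [v0|[->|v2]]; [left | right | exfalso; lra].
by case: v3 => [v0|[v1'|v2]]; [exfalso; lra | exfalso; lra | right; lra].
Qed.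

Lemma double_coord0_face s : coord0 s = 0 \/ coord0 s = 1 ->
  2 * coord0 s <= 0 \/ 2 * coord0 s = 1 \/ 2 <= 2 * coord0 s.
Proof. by case=> ->; [left; rewrite mulr0 | right; right; rewrite mulr1]. Qed.

Lemma concat_fun_continuous u f :
  continuous (fun s => glue (loop u) (loop f) (2 * coord0 s) s).
Proof.
have cu := loop_continuous u; have cf := loop_continuous f.
apply: (@glue_continuous I (fun=> loop u) (fun=> loop f) (fun s => 2 * coord0 s) (fun s => s)).
- by continuity.
- by continuity.
- by continuity.
- by move=> ?; exact: cvg_id.
- by move=> _ s; rewrite loop_set_coord0_1 loop_set_coord0_0.
Qed.

Lemma concat_fun_based u f s : cube_boundary s ->
  glue (loop u) (loop f) (2 * coord0 s) s = x0.
Proof. by move=> sb; apply: glue_based sb (@double_coord0_face s); exact: loop_based. Qed.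

Definition concat u f : Omega := mk_omega (@concat_fun_continuous u f) (@concat_fun_based u f).

Lemma reverse_fun_continuous u : continuous (fun s => loop u (set_coord0 s (1 - coord0 s))).
Proof. by have cu := loop_continuous u; continuity. Qed.

Lemma reverse_fun_based u s : cube_boundary s -> loop u (set_coord0 s (1 - coord0 s)) = x0.
Proof.
move=> /cube_boundaryP sb; apply: loop_boundary.
case: sb => [->|[->|//]]; apply: boundary_set_coord0; [right | left]; lra.
Qed.

Definition reverse u : Omega := mk_omega (@reverse_fun_continuous u) (@reverse_fun_based u).

Lemma loop_concat u f s : loop (concat u f) s = glue (loop u) (loop f) (2 * coord0 s) s.
Proof. by []. Qed.

Lemma loop_reverse u s : loop (reverse u) s = loop u (set_coord0 s (1 - coord0 s)).
Proof. by []. Qed.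

Definition const_omega : Omega := mk_omega (@cst_continuous _ _ x0) (fun _ _ => erefl).

Lemma reverseK : involutive reverse.
Proof.
move=> u; apply: val_inj; apply: funext => s /=.
rewrite /loop /= set_coord0_set_coord0 coord0_set_coord0 clamp_id; last first.
  by have := coord0_itv s; rewrite subr_ge0 lerBlDr lerDl => /andP[-> ->].
by rewrite opprB addrC subrK set_coord0_id.
Qed.

Lemma concat_homotopic_r u f g :
  rel_homotopic f g -> rel_homotopic (concat u f) (concat u g).
Proof.
case=> H [cH H0 H1 Hb].
exists (fun z : I * unitI R => glue (loop u) (fun s => H (s, z.2)) (2 * coord0 z.1) z.1).
split.
- have cu := loop_continuous u.
  apply: (@glue_continuous _ (fun=> loop u) (fun z s => H (s, z.2))
    (fun z => 2 * coord0 z.1) fst); try by continuity.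
  by move=> t s; rewrite loop_set_coord0_1 Hb //; apply: boundary_set_coord0; left.
- by move=> s t t0 /=; rewrite /glue; case: ifP => // _; rewrite H0.
- by move=> s t t1 /=; rewrite /glue; case: ifP => // _; rewrite H1.
- move=> s t sb /=; apply: glue_based sb (@double_coord0_face s).
    exact: loop_based.
  by move=> s' /Hb.
Qed.

Lemma concat_reverse_cancel u f : rel_homotopic (concat (reverse u) (concat u f)) f.
Proof.
pose Z := (I * unitI R)%type.
(* [glue u f] read at parameter [mu] is [reverse u * (u * f)] at time 0 and f
   at time 1. *)
pose mu (z : Z) := (1 - val z.2) * Num.max (1 - 2 * coord0 z.1) (4 * coord0 z.1 - 2)
                   + val z.2 * (coord0 z.1 + 1).
exists (fun z : Z => glue (loop u) (loop f) (mu z) z.1); split.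
- have cu := loop_continuous u; have cf := loop_continuous f.
  have cmu : continuous mu by rewrite /mu; continuity.
  apply: (@glue_continuous _ (fun=> loop u) (fun=> loop f) mu fst); try by continuity.
  by move=> t s /=; rewrite loop_set_coord0_1 loop_set_coord0_0.
- move=> s t t0; rewrite /mu /= t0 subr0 mul1r mul0r addr0.
  have /andP[s0 s1] := coord0_itv s; rewrite {2}/glue.
  case: (lerP (2 * coord0 s) 1) => s2.
    rewrite loop_reverse set_coord0_set_coord0 coord0_set_coord0 clamp_id; last first.
      by apply/andP; split; lra.
    by rewrite /glue (max_idPl _) ?ifT //; lra.
  rewrite loop_concat glue_set_coord0 coord0_set_coord0 clamp_id; last first.
    by apply/andP; split; lra.
  by rewrite (max_idPr _); [congr glue; lra | lra].
- move=> s t t1; rewrite /mu /= t1 subrr mul0r add0r mul1r /glue.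
  have /andP[s0 _] := coord0_itv s; case: ifP => s1.
    have s0' : coord0 s = 0 by lra.
    rewrite s0' add0r loop_set_coord0_1 -/(loop f s) loop_boundary //.
    by exists ord0; left.
  by rewrite addrK set_coord0_id.
- move=> s t sb /=; apply: glue_based sb _ => //; try exact: loop_based.
  rewrite /mu /=; case=> ->; [right; left | right; right].
    by rewrite (max_idPl _); lra.
  by rewrite (max_idPr _); lra.
Qed.

Lemma concat_reverse_null u : rel_homotopic (concat (reverse u) u) const_omega.
Proof.
pose Z := (I * unitI R)%type.
(* At time t the loop u is read at max (|1 - 2 x|, t), x the first coordinate. *)
pose mu (z : Z) := Num.max (Num.max (1 - 2 * coord0 z.1) (2 * coord0 z.1 - 1)) (val z.2).
exists (fun z : Z => loop u (set_coord0 z.1 (mu z))); split.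
- have cu := loop_continuous u.
  have cmu : continuous mu by rewrite /mu; continuity.
  by continuity.
- move=> s t t0; rewrite /mu /= t0.
  have /andP[s0 s1] := coord0_itv s; rewrite /loop /= /glue.
  case: (lerP (2 * coord0 s) 1) => s2.
    rewrite set_coord0_set_coord0 coord0_set_coord0 clamp_id; last by apply/andP; split; lra.
    by rewrite (max_idPl (_ : 2 * _ - 1 <= _)) ?(max_idPl (_ : 0 <= 1 - _)) //; lra.
  rewrite (max_idPr (_ : 1 - 2 * _ <= _)); last by lra.
  by rewrite (max_idPl (_ : 0 <= 2 * _ - 1)) //; lra.
- move=> s t t1; apply/loop_boundary/boundary_set_coord0; right.
  by rewrite le_max t1 lexx orbT.
- move=> s t /cube_boundaryP sb; apply: loop_boundary.
  case: sb => [s0|[s1|//]]; apply: boundary_set_coord0; right; rewrite /mu /= !le_max.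
    by rewrite s0; apply/orP; left; apply/orP; left; lra.
  by rewrite s1; apply/orP; left; apply/orP; right; lra.
Qed.

End concatenation.

Section concat_compact_open.
Variables (R : realType) (m : nat) (X : topologicalType) (x0 : X).
Local Notation I := (cube R m.+1).
Local Notation Omega := (Omega R m.+1 X x0).
Implicit Types (u f h : Omega) (K : set I) (O : set X).

Definition tail_part K : set I :=
  (fun s => set_coord0 s (2 * coord0 s - 1)) @` (K `&` [set s | 2^-1 <= coord0 s]).

Lemma compact_tail_part K : compact K -> compact (tail_part K).
Proof.
move=> cK; apply: continuous_compact; first by apply: continuous_subspaceT; continuity.
by apply: compact_closedI cK _; apply: closed_ge_preimage; exact: coord0_continuous.
Qed.

Lemma concat_image_tail u f K O :
  loop (concat u f) @` K `<=` O -> loop f @` tail_part K `<=` O.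
Proof.
move=> uKO _ [_ [s [Ks s2] <-] <-]; rewrite /= in s2.
have : O (loop (concat u f) s) by apply: uKO; exists s.
rewrite loop_concat /glue; case: ifP => // s1.
have -> : 2 * coord0 s = 1 by lra.
by rewrite subrr loop_set_coord0_0 loop_set_coord0_1.
Qed.

Lemma concat_image_sub u f h K O :
  loop (concat u f) @` K `<=` O -> loop h @` tail_part K `<=` O ->
  loop (concat u h) @` K `<=` O.
Proof.
move=> uKO hKO _ [s Ks <-]; rewrite loop_concat /glue; case: ifP => s1.
  have : O (loop (concat u f) s) by apply: uKO; exists s.
  by rewrite loop_concat /glue s1.
apply: hKO; exists (set_coord0 s (2 * coord0 s - 1)) => //; exists s => //.
by split=> //=; move/negbT: s1; rewrite -ltNge => s1; lra.
Qed.

(* The subbasic neighbourhood [tail_part K, O] of f is mapped into the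
   subbasic neighbourhood [K, O] of [u * f]. *)
Lemma concat_continuous u : continuous (concat u).
Proof.
apply: (@continuous_comp_initial _ _ _ (@set_val _ (Omega_set R m.+1 X x0))).
move=> f; have Ff : Filter ((set_val \o concat u) @ nbhs f) by exact: fmap_filter.
apply/(compact_open_cvgP _ Ff) => K O cK oO uKO.
pose W := [set h : {compact-open, I -> X} | h @` tail_part K `<=` O].
have oW : open W by apply: compact_open_open => //; exact: (compact_tail_part cK).
rewrite nbhs_simpl /=; apply: (@filterS _ _ _ (set_val @^-1` W)).
  by move=> h /= hW; exact: concat_image_sub uKO hW.
apply: open_nbhs_nbhs; split; first exact: (continuousP _).1 (@set_val_continuous _ _) W oW.
exact: concat_image_tail uKO.
Qed.

End concat_compact_open.

Section induced_maps.
Variables (R : realType) (n : nat) (X : topologicalType) (x0 : X).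
Local Notation Omega := (Omega R n X x0).
Local Notation pin := (pin R n X x0).
Local Notation proj := (@pin_proj R n X x0).
Variable F : Omega -> Omega.
Hypothesis F_homotopic : forall f g, rel_homotopic f g -> rel_homotopic (F f) (F g).

Definition pin_repr (c : pin) : Omega := projT1 (cid (pin_proj_surj c)).

Lemma pin_reprK : cancel pin_repr proj.
Proof. by move=> c; exact: projT2 (cid (pin_proj_surj c)). Qed.

Definition pin_map (c : pin) : pin := pin_proj (F (pin_repr c)).

Lemma pin_map_proj f : pin_map (pin_proj f) = pin_proj (F f).
Proof. by apply/pin_proj_eq/F_homotopic/pin_proj_eq; rewrite pin_reprK. Qed.

Lemma pin_map_continuous : continuous F -> continuous pin_map.
Proof.
move=> cF; apply/continuousP => A oA.
change (open (proj @^-1` (pin_map @^-1` A))).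
have -> : proj @^-1` (pin_map @^-1` A) = F @^-1` (proj @^-1` A).
  by apply/seteqP; split => f /=; rewrite pin_map_proj.
exact: (continuousP _).1 cF _ oA.
Qed.

End induced_maps.

Lemma homeomorphism_comp (T : topologicalType) (h k : T -> T) :
  homeomorphism h -> homeomorphism k -> homeomorphism (k \o h).
Proof.
move=> [h' [ch ch' hK h'K]] [k' [ck ck' kK k'K]].
exists (h' \o k'); split; try exact: continuous_compose.
- by move=> x /=; rewrite kK hK.
- by move=> x /=; rewrite h'K k'K.
Qed.

Section translation.
Variables (R : realType) (m : nat) (X : topologicalType) (x0 : X).
Local Notation Omega := (Omega R m.+1 X x0).
Local Notation pin := (pin R m.+1 X x0).
Implicit Types u f : Omega.

Definition translate u : pin -> pin := pin_map (concat u).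

Lemma translate_proj u f : translate u (pin_proj f) = pin_proj (concat u f).
Proof. by apply: pin_map_proj; exact: concat_homotopic_r. Qed.

Lemma translateK u : cancel (translate u) (translate (reverse u)).
Proof.
move=> c; rewrite -[c]pin_reprK !translate_proj.
by apply/pin_proj_eq; exact: concat_reverse_cancel.
Qed.

Lemma translate_homeomorphism u : homeomorphism (translate u).
Proof.
have ct v : continuous (translate v).
  by apply: pin_map_continuous; [exact: concat_homotopic_r | exact: concat_continuous].
exists (translate (reverse u)); split => //; first exact: translateK.
by have := translateK (reverse u); rewrite reverseK.
Qed.

Lemma pin_proj_concat_reverse u f :
  pin_proj (concat (reverse u) u) = pin_proj (concat (reverse f) f).
Proof.
apply/pin_proj_eq; apply: rel_homotopic_trans (concat_reverse_null u) _.
exact/rel_homotopic_sym/concat_reverse_null.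
Qed.

End translation.

Theorem proposition3p2 (R : realType) (X : topologicalType) (x0 : X) (n : nat)
  (hn : (1 <= n)%N) (a b : pin R n X x0) :
  exists h : pin R n X x0 -> pin R n X x0, homeomorphism h /\ h a = b.
Proof.
case: n hn a b => [//|m] _ a b.
pose u := pin_repr a; pose v := pin_repr b.
exists (translate v \o translate (reverse u)); split.
  exact: homeomorphism_comp (translate_homeomorphism _) (translate_homeomorphism _).
rewrite /= -[a]pin_reprK -[b]pin_reprK -/u -/v.
rewrite translate_proj (pin_proj_concat_reverse u v) translate_proj.
by apply/pin_proj_eq; have := concat_reverse_cancel (reverse v) v; rewrite reverseK.
Qed.
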